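(* Let $L\ge18$ with $L\equiv 12\pmod{24}$. Then $M_S(L,3)\le (L-4)/8$.
   Context: $\mathcal{P}(L,\omega)$ is the set of $\omega$-element subsets of $\mathbb{Z}_L$. For $\mathcal{I}\in\mathcal{P}(L,\omega)$: $d(\mathcal{I})=\{a-b \bmod L: a,b\in\mathcal{I}\}$, $d^*(\mathcal{I})=d(\mathcal{I})\setminus\{0\}$. A strongly conflict-avoiding code (SCAC) of length $L$ and weight $\omega$ is a set $\mathcal{C}=\{\mathcal{I}_1,\dots,\mathcal{I}_M\}\subseteq\mathcal{P}(L,\omega)$ such that for all $j\ne k$, $\big(d^*(\mathcal{I}_j)\cup(d^*(\mathcal{I}_j)+1)\cup(d^*(\mathcal{I}_j)-1)\big)\cap d(\mathcal{I}_k)=\emptyset$ (shifts mod $L$). $M_S(L,\omega)$ denotes the maximum number of codewords in an SCAC of length $L$ and weight $\omega$. *)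

(* Z_L is modelled by 'Z_L (statement assumes L >= 18, so
   'Z_L is exactly Z/LZ). *)
From HB Require Import structures.
From mathcomp Require Import all_boot all_order all_algebra.
Set Implicit Arguments. Unset Strict Implicit. Unset Printing Implicit Defensive.
Import GRing.Theory.
Local Open Scope ring_scope.

Definition dset (L : nat) (I : {set 'Z_L}) : {set 'Z_L} :=
  [set a - b | a in I, b in I].

Definition dstar (L : nat) (I : {set 'Z_L}) : {set 'Z_L} :=
  dset I :\ 0.

Definition dstar_ext (L : nat) (I : {set 'Z_L}) : {set 'Z_L} :=
  dstar I :|: [set x + 1 | x in dstar I] :|: [set x - 1 | x in dstar I].

Definition is_SCAC (L w : nat) (C : {set {set 'Z_L}}) : Prop :=
  (forall I, I \in C -> #|I| = w) /\
  (forall J K, J \in C -> K \in C -> J != K ->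
     [disjoint dstar_ext J & dset K]).

(* Write L = 24t + 12 and, for a codeword J, dshift J = d*(J) ∪ (d*(J) + 1).
   Since 0 ∈ d(K) for every codeword K, the conflict-avoiding condition forces
   ±1 ∉ d*(J), makes the sets dshift J pairwise disjoint subsets of Z_L \ {0, 1},
   and puts every residue in at most one d*(J).  A case analysis on the three
   cyclic gaps of a codeword shows that its weight
   |dshift J| + 4 [8t+4 ∈ d*(J)] + 2 [12t+6 ∈ d*(J)] is at least 8, whence
   8 |C| ≤ (L - 2) + 4 + 2 and |C| ≤ 3t + 2.  If |C| = 3t + 2, every inequality
   is tight: all weights are 8, the sets dshift J partition Z_L \ {0, 1}, no
   residue z with z ∈ d*(J) has z + 1 ∈ d*(K), and 12t+6 ∈ d*(J) forces
   6t+3 ∈ d*(J).  The partition then pushes 6t+3, 6t+5, ..., 12t+5 into the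
   difference sets one after the other, but 12t+5 and 12t+6 are consecutive. *)

From mathcomp Require Import all_boot all_order all_algebra zify.

Set Implicit Arguments. Unset Strict Implicit. Unset Printing Implicit Defensive.

(** * Gap arithmetic *)

(* The difference set {±g1, ±g2, ±g3} of a codeword whose cyclic gaps g1, g2, g3
   sum to N, read as residues in [0, N). *)
Definition gap_diff (N g1 g2 g3 v : nat) : Prop :=
  v = g1 \/ v = N - g1 \/ v = g2 \/ v = N - g2 \/ v = g3 \/ v = N - g3.

Definition shift_mem (N : nat) (P : nat -> Prop) (v : nat) : Prop :=
  v < N /\ (P v \/ 1 <= v /\ P (v - 1)).

Definition shift_mems (N : nat) (P : nat -> Prop) (s : seq nat) : Prop :=
  foldr (fun v Q => shift_mem N P v /\ Q) True s.

Definition shift_card_ge (N : nat) (P : nat -> Prop) (k : nat) : Prop :=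
  exists s, [/\ sorted ltn s, shift_mems N P s & k <= size s].

(* 8t+4 = N/3 and 12t+6 = N/2 are the only residues that can occur as a difference
   of a three-element set with multiplicity. *)
Definition gap_bounds (t N : nat) (P : nat -> Prop) : Prop :=
  [/\ shift_card_ge N P 8 \/ P (8 * t + 4) /\ shift_card_ge N P 4
        \/ P (12 * t + 6) /\ shift_card_ge N P 6,
      (exists v, P v /\ P (v + 1)) ->
        shift_card_ge N P 10 \/ P (8 * t + 4) /\ shift_card_ge N P 8
        \/ P (12 * t + 6) /\ shift_card_ge N P 8 &
      P (12 * t + 6) -> P (6 * t + 3) \/ shift_card_ge N P 8].

Lemma shift_memsP N (P : nat -> Prop) s v :
  shift_mems N P s -> v \in s -> shift_mem N P v.
Proof. by elim: s => //= u s IH [Pu /IH]; rewrite inE => Ps /orP [/eqP->|/Ps]. Qed.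

Lemma gap_bounds_ext t N (P Q : nat -> Prop) :
  (forall v, P v <-> Q v) -> gap_bounds t N P -> gap_bounds t N Q.
Proof.
move=> PQ.
have mems s : shift_mems N P s -> shift_mems N Q s.
  elim: s => //= v s IH [[vN Pv] /IH]; split=> //; split=> //.
  by case: Pv => [/PQ|[? /PQ]]; auto.
have ge k : shift_card_ge N P k -> shift_card_ge N Q k.
  by case=> s [? /mems ? ?]; exists s.
case=> [b1 b2 b3]; split.
- by case: b1 => [/ge|[[/PQ ? /ge]|[/PQ ? /ge]]]; auto.
- move=> [v [/PQ Pv /PQ Pv1]].
  by case: (b2 (ex_intro _ v (conj Pv Pv1))) => [/ge|[[/PQ ? /ge]|[/PQ ? /ge]]]; auto.
- by move=> /PQ /b3 [/PQ|/ge]; auto.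
Qed.

Ltac decide_disj := match goal with
  | |- _ \/ _ => first [left; decide_disj | right; decide_disj]
  | |- _ /\ _ => split; decide_disj
  | |- [/\ _, _ & _] => split; decide_disj
  | _ => lia
  end.

Ltac exhibit s := exists s; rewrite /= /shift_mem /gap_diff; decide_disj.

Ltac no_consecutive := let v := fresh "v" in
  move=> [v []]; rewrite /gap_diff; case=> [->|[->|[->|[->|[->|->]]]]]; lia.

Ltac not_diff := rewrite /gap_diff; lia.

(* Each lower bound is witnessed by an explicit increasing list of residues that
   are differences or differences plus one; comparing 2 g3 with N fixes the order
   of the six residues ±gi in [0, N). *)
Lemma sorted_gaps_bounds t N g1 g2 g3 :
  N = 24 * t + 12 -> 2 <= g1 -> g1 <= g2 -> g2 <= g3 -> g1 + g2 + g3 = N ->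
  gap_bounds t N (gap_diff N g1 g2 g3).
Proof.
move=> hN h1 h12 h23 hs.
have [g3_lt|g3_ge] := ltnP (2 * g3) N.
  have [e12|n12] := eqVneq g1 g2; have [e23|n23] := eqVneq g2 g3.
  - split; [|no_consecutive|not_diff].
    by right; left; split; [not_diff|exhibit [:: g1; g1+1; N-g1; N-g1+1]].
  - split; [|no_consecutive|not_diff].
    by left; exhibit [:: g1; g1+1; g3; g3+1; N-g3; N-g3+1; N-g1; N-g1+1].
  - split; [|no_consecutive|not_diff].
    by left; exhibit [:: g1; g1+1; g2; g2+1; N-g2; N-g2+1; N-g1; N-g1+1].
  split; [|move=> cons|not_diff].
    by left; exhibit [:: g1; g2; g3; g3+1; N-g3; N-g2; N-g1; N-g1+1].
  have [c12|c12] := eqVneq g2 g1.+1; have [c23|c23] := eqVneq g3 g2.+1.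
  - by right; left; split;
      [not_diff|exhibit [:: g1; g2; g3; g3+1; N-g3; N-g2; N-g1; N-g1+1]].
  - by left; exhibit [:: g1; g2; g2+1; g3; g3+1; N-g3; N-g3+1; N-g2; N-g1; N-g1+1].
  - by left; exhibit [:: g1; g1+1; g2; g3; g3+1; N-g3; N-g2; N-g2+1; N-g1; N-g1+1].
  - by move: cons; no_consecutive.
have [g3_half|g3_gt] := eqVneq (2 * g3) N.
  have [e12|n12] := eqVneq g1 g2.
  - split; [|no_consecutive|by left; not_diff].
    by right; right; split; [not_diff|exhibit [:: g1; g1+1; g3; g3+1; N-g1; N-g1+1]].
  have ge8 : shift_card_ge N (gap_diff N g1 g2 g3) 8.
    by exhibit [:: g1; g1+1; g2; g2+1; g3; g3+1; N-g2; N-g1].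
  by split=> [|_|_]; [left | right; right; split; [not_diff|] | right].
have [e12|n12] := eqVneq g1 g2.
  split; [|no_consecutive|not_diff].
  by left; exhibit [:: g1; g1+1; g1+g2; g1+g2+1; N-g1-g2; N-g1-g2+1; N-g1; N-g1+1].
split; [|move=> cons|not_diff].
  by left; exhibit [:: g1; g2; g1+g2; g1+g2+1; N-g1-g2; N-g2; N-g1; N-g1+1].
have [c12|c12] := eqVneq g2 g1.+1; last by move: cons; no_consecutive.
by left; exhibit [:: g1; g2; g2+1; g1+g2; g1+g2+1; N-g1-g2; N-g1-g2+1; N-g2; N-g1; N-g1+1].
Qed.

Lemma gaps_bounds t N g1 g2 g3 (P : nat -> Prop) :
  N = 24 * t + 12 -> 2 <= g1 -> 2 <= g2 -> 2 <= g3 -> g1 + g2 + g3 = N ->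
  (forall v, P v <-> gap_diff N g1 g2 g3 v) -> gap_bounds t N P.
Proof.
move=> hN h1 h2 h3 hs hP.
have sorted_case a b c : (forall v, gap_diff N a b c v <-> gap_diff N g1 g2 g3 v) ->
    2 <= a -> a <= b -> b <= c -> a + b + c = N -> gap_bounds t N P.
  move=> habc ha hab hbc habcN.
  apply: gap_bounds_ext (sorted_gaps_bounds hN ha hab hbc habcN) => v.
  by split=> [/habc/hP|/hP/habc].
have [l12|l12] := leqP g1 g2; have [l23|l23] := leqP g2 g3; have [l13|l13] := leqP g1 g3.
all: first
  [ apply: (sorted_case g1 g2 g3); [by move=> v; rewrite /gap_diff; tauto|lia..]
  | apply: (sorted_case g1 g3 g2); [by move=> v; rewrite /gap_diff; tauto|lia..]
  | apply: (sorted_case g2 g1 g3); [by move=> v; rewrite /gap_diff; tauto|lia..]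
  | apply: (sorted_case g2 g3 g1); [by move=> v; rewrite /gap_diff; tauto|lia..]
  | apply: (sorted_case g3 g1 g2); [by move=> v; rewrite /gap_diff; tauto|lia..]
  | apply: (sorted_case g3 g2 g1); [by move=> v; rewrite /gap_diff; tauto|lia..] ].
Qed.

Import GRing.Theory.
Local Open Scope ring_scope.

(** * Difference sets in 'Z_L *)

Lemma dset_triple (L : nat) (a b c : 'Z_L) :
  dset [set a; b; c] = [set 0; b - a; a - b; c - b; b - c; c - a; a - c].
Proof.
apply/setP => x; apply/imset2P/idP => [[u v]|].
  by rewrite !inE -!orbA => /or3P [] /eqP -> /or3P [] /eqP -> ->; rewrite ?subrr !eqxx ?orbT.
have [ha hb hc] : [/\ a \in [set a; b; c], b \in [set a; b; c] & c \in [set a; b; c]].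
  by rewrite !inE !eqxx !orbT.
rewrite !inE -!orbA => /or4P [/eqP->|/eqP->|/eqP->|/or4P [/eqP->|/eqP->|/eqP->|/eqP->]].
- by exists a a; rewrite ?subrr.
all: by eexists; last reflexivity.
Qed.

Lemma dstar_dset L (J : {set 'Z_L}) x : x \in dstar J -> x \in dset J.
Proof. by rewrite inE => /andP []. Qed.

Lemma dset0 L (J : {set 'Z_L}) : J != set0 -> 0 \in dset J.
Proof. by case/set0Pn => a aJ; apply/imset2P; exists a a; rewrite ?subrr. Qed.

Lemma dstar_ext_shifts L (J : {set 'Z_L}) z : z \in dstar J ->
  [/\ z \in dstar_ext J, z + 1 \in dstar_ext J & z - 1 \in dstar_ext J].
Proof.
move=> zJ; rewrite /dstar_ext !in_setU zJ.
by rewrite (imset_f (fun x => x + 1) zJ) (imset_f (fun x => x - 1) zJ) !orbT.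
Qed.

Definition dshift (L : nat) (J : {set 'Z_L}) : {set 'Z_L} :=
  dstar J :|: [set y + 1 | y in dstar J].

Lemma mem_dshift L (J : {set 'Z_L}) x :
  (x \in dshift J) = (x \in dstar J) || (x - 1 \in dstar J).
Proof.
rewrite /dshift inE; congr (_ || _); apply/imsetP/idP => [[y hy ->]|h].
  by rewrite addrK.
by exists (x - 1); rewrite ?subrK.
Qed.

Lemma dstar0 L (J : {set 'Z_L}) : 0 \notin dstar J.
Proof. by rewrite !inE eqxx. Qed.

(* The bonuses compensate the codewords with colliding differences: d*(J) is
   {±(8t+4)} when all gaps are equal, and 12t+6 = -(12t+6) is counted once. *)
Definition weight (L t : nat) (J : {set 'Z_L}) : nat :=
  (#|dshift J| + 4 * ((8 * t + 4)%:R \in dstar J) + 2 * ((12 * t + 6)%:R \in dstar J))%N.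

Lemma sum_weightE L t (C : {set {set 'Z_L}}) :
  (\sum_(J in C) weight t J = \sum_(J in C) #|dshift J|
     + 4 * \sum_(J in C) ((8 * t + 4)%:R \in dstar J)
     + 2 * \sum_(J in C) ((12 * t + 6)%:R \in dstar J))%N.
Proof. by rewrite /weight !big_distrr big_split big_split. Qed.

Section Residues.
(* Residues modulo n.+2, so that 'Z_n.+2 really is Z/(n+2)Z. *)
Variable n : nat.

Lemma val_natZp (v : nat) : (v < n.+2)%N -> (v%:R : 'Z_n.+2) = v :> nat.
Proof. by move=> hv; rewrite val_Zp_nat // modn_small. Qed.

Lemma val_subZp (x y : 'Z_n.+2) :
  x - y = (if y <= x then x - y else n.+2 + x - y)%N :> nat.
Proof.
have [hx hy] : (x < n.+2)%N /\ (y < n.+2)%N by [].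
rewrite -[x in LHS]natr_Zp -[y in LHS]natr_Zp; case: leqP => h.
  by rewrite -natrB // val_natZp //; lia.
have -> : (x%:R - y%:R : 'Z_n.+2) = (n.+2 + x - y)%N%:R.
  by rewrite natrB 1?natrD ?pchar_Zp ?add0r //; lia.
by rewrite val_natZp; lia.
Qed.

Lemma sorted_enum_set (J : {set 'Z_n.+2}) : sorted ltn (map val (enum J)).
Proof.
rewrite /enum_mem -enumT sorted_map.
apply: sorted_filter; first by move=> y x z; apply: ltn_trans.
by rewrite -sorted_map val_enum_ord iota_ltn_sorted.
Qed.

Lemma card3_sorted (J : {set 'Z_n.+2}) : #|J| = 3 ->
  exists a b c : 'Z_n.+2, [/\ (a < b)%N, (b < c)%N & J = [set a; b; c]].
Proof.
have := sorted_enum_set J; have := set_enum J; rewrite cardE.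
case: (enum J) => [|a [|b [|c []]]] //= eJ /and3P [ab bc _] _.
by exists a, b, c; split=> //; rewrite -eJ; apply/setP => x; rewrite !inE orbA.
Qed.

Lemma natZp_inj (u v : nat) :
  (u%:R : 'Z_n.+2) = v%:R -> (u < n.+2)%N -> (v < n.+2)%N -> u = v.
Proof.
by move=> /(congr1 (@nat_of_ord _)) uv uN vN; rewrite -(val_natZp uN) uv val_natZp.
Qed.

Lemma cardsC01 : #|~: ([set 0; 1] : {set 'Z_n.+2})| = n.
Proof.
have cardZ : #|'Z_n.+2| = n.+2 by rewrite card_ord.
by rewrite cardsCs setCK cardZ cards2 eq_sym oner_eq0 /=; lia.
Qed.

End Residues.

Section Codeword.
Variable n : nat.

Lemma dstar_triple_gaps (a b c x : 'Z_n.+2) : (a < b)%N -> (b < c)%N ->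
  x \in dstar [set a; b; c] <-> gap_diff n.+2 (b - a) (c - b) (n.+2 - (c - a)) x.
Proof.
move=> ab bc; have ac := ltn_trans ab bc.
have val_sub (u v : 'Z_n.+2) : (v < u)%N ->
    nat_of_ord (u - v) = (u - v)%N /\ nat_of_ord (v - u) = (n.+2 - (u - v))%N.
  move=> vu; have uN : (u < n.+2)%N by [].
  by rewrite !val_subZp ltnW // leqNgt vu /=; split=> //; lia.
have [ba ab'] := val_sub _ _ ab; have [cb bc'] := val_sub _ _ bc.
have [ca ac'] := val_sub _ _ ac.
have [xN cN] : (x < n.+2)%N /\ (c < n.+2)%N by [].
have nz (y : 'Z_n.+2) : nat_of_ord y != 0%N -> y != 0 by apply: contraNneq => ->.
rewrite /dstar dset_triple !inE -!orbA /gap_diff; split.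
  case/andP => x0 /or4P [/eqP x0'|/eqP->|/eqP->|/or4P [/eqP->|/eqP->|/eqP->|/eqP->]];
    [by rewrite x0' eqxx in x0 | (rewrite ?ba ?ab' ?cb ?bc' ?ca ?ac'; lia) ..].
case=> [hx|[hx|[hx|[hx|[hx|hx]]]]];
  [ have -> : x = b - a | have -> : x = a - b | have -> : x = c - b
  | have -> : x = b - c | have -> : x = a - c | have -> : x = c - a ];
  try solve [apply: ord_inj; rewrite ?ba ?ab' ?cb ?bc' ?ca ?ac'; lia];
  rewrite eqxx !orbT andbT; apply: nz; rewrite ?ba ?ab' ?cb ?bc' ?ca ?ac'; lia.
Qed.

Lemma card_dshift_ge (J : {set 'Z_n.+2}) (P : nat -> Prop) k :
  (forall v, P v -> v%:R \in dstar J) -> shift_card_ge n.+2 P k -> (k <= #|dshift J|)%N.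
Proof.
move=> PJ [s [s_sorted s_mems ks]]; apply: leq_trans ks _.
have sN v : v \in s -> (v < n.+2)%N by move=> /(shift_memsP s_mems) [].
rewrite -(size_map (fun v => v%:R : 'Z_n.+2)) cardE; apply: uniq_leq_size.
  rewrite map_inj_in_uniq ?(sorted_uniq ltn_trans ltnn) // => u v us vs e.
  by rewrite -(val_natZp (sN u us)) -(val_natZp (sN v vs)) e.
move=> _ /mapP [v vs ->]; rewrite mem_enum mem_dshift.
case: (shift_memsP s_mems vs) => _ [/PJ -> // | [v1 /PJ]].
by rewrite natrB // mulr1n => ->; rewrite orbT.
Qed.

Lemma weight_bounds t (J : {set 'Z_n.+2}) :
  n.+2 = (24 * t + 12)%N -> #|J| = 3 -> 1 \notin dstar J ->
  [/\ (8 <= weight t J)%N,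
      forall z, z \in dstar J -> z + 1 \in dstar J -> (10 <= weight t J)%N &
      (12 * t + 6)%:R \in dstar J -> (6 * t + 3)%:R \in dstar J \/ (10 <= weight t J)%N].
Proof.
move=> hN /card3_sorted [a [b [c [ab bc eJ]]]] J1.
have cN : (c < n.+2)%N by [].
pose P v := (v < n.+2)%N /\ (v%:R : 'Z_n.+2) \in dstar J.
have PE v : P v <-> gap_diff n.+2 (b - a) (c - b) (n.+2 - (c - a)) v.
  rewrite /P eJ; split=> [[vN /dstar_triple_gaps] | hv].
    by rewrite val_natZp //; apply.
  have vN : (v < n.+2)%N by move: hv; rewrite /gap_diff; lia.
  by split=> //; apply/dstar_triple_gaps; rewrite ?val_natZp.
have not_gap1 : ~ gap_diff n.+2 (b - a) (c - b) (n.+2 - (c - a)) 1.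
  by move/PE; rewrite /P mulr1n (negbTE J1); case.
have [g1 g2 g3] : [/\ 2 <= b - a, 2 <= c - b & 2 <= n.+2 - (c - a)]%N.
  by split; move: not_gap1; rewrite /gap_diff; lia.
have gsum : (b - a + (c - b) + (n.+2 - (c - a)) = n.+2)%N by lia.
have [b8 b10 b_half] := gaps_bounds hN g1 g2 g3 gsum PE.
have card_ge k : shift_card_ge n.+2 P k -> (k <= #|dshift J|)%N.
  by apply: card_dshift_ge => v [].
have P_in v : P v -> (v%:R : 'Z_n.+2) \in dstar J by case.
rewrite /weight; split.
- by case: b8 => [/card_ge|[[/P_in-> /card_ge]|[/P_in-> /card_ge]]]; lia.
- move=> z z_in z1_in.
  have zN : (z < n.+2)%N by [].
  have z1N : (z.+1 < n.+2)%N.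
    rewrite ltn_neqAle zN andbT; apply: contraTneq z1_in => z1.
    by rewrite -[z]natr_Zp natr1 z1 pchar_Zp // dstar0.
  have cons : exists v, P v /\ P (v + 1)%N.
    by exists z; rewrite /P addn1 -natr1 natr_Zp.
  by case: (b10 cons) => [/card_ge|[[/P_in-> /card_ge]|[/P_in-> /card_ge]]]; lia.
- move=> half_in; have [|[_ ?]|/card_ge] := b_half; [by split=> //; lia|by left|].
  by rewrite half_in; lia.
Qed.

End Codeword.

(** * Strongly conflict-avoiding codes *)

Lemma card_bigcup_disjoint (I T : finType) (A : {set I}) (F : I -> {set T}) :
  {in A &, forall i j, i != j -> [disjoint F i & F j]} ->
  #|\bigcup_(i in A) F i| = (\sum_(i in A) #|F i|)%N.
Proof.
have [k] := ubnP #|A|; elim: k A => // k IH A ltAk disjF.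
have [->|[i Ai]] := set_0Vmem A; first by rewrite !big_set0 cards0.
rewrite (big_setD1 i Ai) (big_setD1 i Ai) /= cardsU.
have /eqP -> : F i :&: \bigcup_(j in A :\ i) F j == set0.
  rewrite setI_eq0; apply/bigcup_disjointP => j; rewrite !inE => /andP [ji Aj].
  by apply: disjF; rewrite // eq_sym.
rewrite cards0 subn0 IH //; first by move: ltAk; rewrite (cardsD1 i A) Ai.
by move=> u v; rewrite !inE => /andP [_ Au] /andP [_ Av]; apply: disjF.
Qed.

Lemma sum_bool_le1 (I : finType) (A : {set I}) (b : pred I) :
  {in A &, forall i j, b i -> b j -> i = j} -> (\sum_(i in A) b i <= 1)%N.
Proof.
move=> bA; have [i /andP [Ai bi]|nob] := pickP [pred i | (i \in A) && b i].
  rewrite (bigD1 i Ai) big1 ?bi //= => j /andP [Aj ji].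
  by apply/eqP; rewrite eqb0; apply: contra ji => bj; rewrite (bA _ _ Aj Ai bj bi).
by rewrite big1 // => j Aj; move: (nob j); rewrite /= Aj; case: (b j).
Qed.

Lemma eq_const_of_sum_le (I : finType) (A : {set I}) (f : I -> nat) k :
  (forall i, i \in A -> (k <= f i)%N) -> (\sum_(i in A) f i <= #|A| * k)%N ->
  forall i, i \in A -> f i = k.
Proof.
move=> ge le i iA.
have [_] := leqif_sum (fun j jA => leqif_eq (ge j jA)).
by rewrite eqn_leq leq_sum // sum_nat_const le => /esym/forall_inP/(_ i iA)/eqP.
Qed.

Section ConflictAvoiding.
Variables (n w : nat) (C : {set {set 'Z_n.+2}}).
Hypothesis C_scac : is_SCAC w C.

Lemma scac_dstar_apart J K z y : J \in C -> K \in C -> J != K ->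
  z \in dstar J -> y \in dstar K -> [/\ y != z, y != z + 1 & y != z - 1].
Proof.
move=> JC KC JK zJ /dstar_dset yK; have dJK := C_scac.2 J K JC KC JK.
have [z0 z1 z2] := dstar_ext_shifts zJ.
by split; apply: contraTneq yK => ->; rewrite (disjointFr dJK).
Qed.

Lemma scac_dstar_unique J K z : J \in C -> K \in C ->
  z \in dstar J -> z \in dstar K -> J = K.
Proof.
move=> JC KC zJ zK; apply/eqP; apply: contraTT isT => JK.
by have [] := scac_dstar_apart JC KC JK zJ zK; rewrite eqxx.
Qed.

Lemma scac_dshift_disjoint J K : J \in C -> K \in C -> J != K ->
  [disjoint dshift J & dshift K].
Proof.
move=> JC KC JK; apply/pred0P => x /=; apply/negP => /andP [].
have apart := scac_dstar_apart JC KC JK.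
rewrite !mem_dshift => /orP [] xJ /orP [] xK; have [] := apart _ _ xJ xK;
  by rewrite ?subrK eqxx.
Qed.

Hypotheses (w_gt0 : (0 < w)%N) (C_gt1 : (1 < #|C|)%N).

Lemma scac_unit_notin J : J \in C -> 1 \notin dstar J /\ -1 \notin dstar J.
Proof.
move=> JC; have [K] : exists K, K \in C :\ J.
  by apply/set0Pn; rewrite -card_gt0; move: C_gt1; rewrite (cardsD1 J) JC.
case/setD1P => KJ KC.
have K0 : 0 \in dset K by rewrite dset0 // -card_gt0 (C_scac.1 K KC).
have JK : J != K by rewrite eq_sym.
have dJK := C_scac.2 J K JC KC JK.
split; apply/negP => u1; have [_] := dstar_ext_shifts u1.
  by rewrite subrr (disjointFl dJK K0).
by rewrite addNr (disjointFl dJK K0).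
Qed.

Lemma scac_dshift_sub J : J \in C -> dshift J \subset ~: ([set 0; 1] : {set 'Z_n.+2}).
Proof.
move=> JC; have [n1 nN1] := scac_unit_notin JC.
apply/subsetP => x; rewrite mem_dshift in_setC in_set2; apply: contraLR.
by rewrite negbK negb_or => /orP [] /eqP->; rewrite ?subrr ?sub0r dstar0 ?n1 ?nN1.
Qed.

Lemma sum_card_dshift_le : (\sum_(J in C) #|dshift J| <= n)%N.
Proof.
rewrite -card_bigcup_disjoint; last by move=> J K; apply: scac_dshift_disjoint.
rewrite -[X in (_ <= X)%N](cardsC01 n); apply: subset_leq_card.
by apply/bigcupsP => J; apply: scac_dshift_sub.
Qed.

End ConflictAvoiding.

Section WeightThree.
Variables (n t : nat) (C : {set {set 'Z_n.+2}}).
Hypotheses (hN : n.+2 = (24 * t + 12)%N) (C_scac : is_SCAC 3 C) (C_gt1 : (1 < #|C|)%N).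

Lemma scac_weight_bounds J : J \in C ->
  [/\ (8 <= weight t J)%N,
      forall z, z \in dstar J -> z + 1 \in dstar J -> (10 <= weight t J)%N &
      (12 * t + 6)%:R \in dstar J -> (6 * t + 3)%:R \in dstar J \/ (10 <= weight t J)%N].
Proof.
move=> JC; apply: weight_bounds hN (C_scac.1 J JC) _.
by case: (scac_unit_notin C_scac _ C_gt1 JC).
Qed.

Lemma sum_weight_ge : (8 * #|C| <= \sum_(J in C) weight t J)%N.
Proof.
rewrite mulnC -sum_nat_const; apply: leq_sum => J JC.
by case: (scac_weight_bounds JC).
Qed.

Lemma sum_dstar_le1 k : (\sum_(J in C) (k%:R \in dstar J) <= 1)%N.
Proof. by apply: sum_bool_le1 => J K JC KC; apply: (scac_dstar_unique C_scac JC KC). Qed.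

Lemma sum_weight_le : (\sum_(J in C) weight t J <= n + 6)%N.
Proof.
rewrite sum_weightE; have := sum_card_dshift_le C_scac isT C_gt1.
by have := sum_dstar_le1 (8 * t + 4); have := sum_dstar_le1 (12 * t + 6); lia.
Qed.

Section Tight.
(* n + 6 = L + 4 bounds the total weight, so this is the case |C| = 3t + 2. *)
Hypothesis tight : (n + 6 <= 8 * #|C|)%N.

Lemma tight_weight J : J \in C -> weight t J = 8%N.
Proof.
apply: eq_const_of_sum_le => [K KC|]; first by case: (scac_weight_bounds KC).
by apply: leq_trans sum_weight_le _; rewrite mulnC.
Qed.

Lemma tight_sums : (\sum_(J in C) #|dshift J| = n)%N /\
  (\sum_(J in C) ((12 * t + 6)%:R \in dstar J) = 1)%N.
Proof.
have := sum_weight_ge; rewrite sum_weightE.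
have := sum_card_dshift_le C_scac isT C_gt1.
by have := sum_dstar_le1 (8 * t + 4); have := sum_dstar_le1 (12 * t + 6); lia.
Qed.

Lemma tight_cover v : (1 < v < n.+2)%N -> exists2 J, J \in C & v%:R \in dshift J.
Proof.
case/andP => v1 vN.
have sub : \bigcup_(J in C) dshift J \subset ~: ([set 0; 1] : {set 'Z_n.+2}).
  by apply/bigcupsP => J JC; exact (scac_dshift_sub C_scac isT C_gt1 JC).
have covered : \bigcup_(J in C) dshift J = ~: ([set 0; 1] : {set 'Z_n.+2}).
  apply/eqP; rewrite eqEcard sub cardsC01 card_bigcup_disjoint ?tight_sums.1 ?leqnn //.
  by move=> J K JC KC; exact: (scac_dshift_disjoint C_scac JC KC).
have : (v%:R : 'Z_n.+2) \in ~: ([set 0; 1] : {set 'Z_n.+2}).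
  rewrite in_setC in_set2; apply/norP; split; apply/eqP => v01.
  - by have := @natZp_inj n v 0 v01; lia.
  - by have := @natZp_inj n v 1 v01; lia.
by rewrite -covered => /bigcupP [J JC vJ]; exists J.
Qed.

Lemma tight_half : exists2 J, J \in C & (12 * t + 6)%:R \in dstar J.
Proof.
have /eqP/sum_nat_eq1 [J [JC hJ _]] := tight_sums.2.
by exists J => //; move: hJ; case: (_ \in _).
Qed.

Lemma tight_no_consecutive J K z : J \in C -> K \in C ->
  z \in dstar J -> z + 1 \in dstar K -> False.
Proof.
move=> JC KC zJ; have [<- z1J|JK z1K] := eqVneq J K.
  by have [_ w10 _] := scac_weight_bounds JC; have := w10 z zJ z1J; rewrite tight_weight.
by have [_ + _] := scac_dstar_apart C_scac JC KC JK zJ z1K; rewrite eqxx.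
Qed.

Lemma tight_chain j : (j <= 3 * t + 1)%N ->
  exists2 J, J \in C & (6 * t + 3 + 2 * j)%:R \in dstar J.
Proof.
elim: j => [_|j IH j_le].
  have [J JC hJ] := tight_half; have [_ _ half] := scac_weight_bounds JC.
  by exists J; rewrite // muln0 addn0; case: (half hJ); rewrite // tight_weight.
have [J JC zJ] := IH (ltnW j_le).
have [|K KC] := @tight_cover (6 * t + 3 + 2 * j.+1); first by apply/andP; split; lia.
rewrite mem_dshift => /orP [yK|y1K]; first by exists K.
have [] := tight_no_consecutive JC KC zJ.
have e : (6 * t + 3 + 2 * j.+1 = (6 * t + 3 + 2 * j).+2)%N by lia.
by rewrite e -!natr1 addrK in y1K.
Qed.

Lemma tight_false : False.
Proof.
have [J JC zJ] := tight_chain (leqnn (3 * t + 1)).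
have [K KC hK] := tight_half.
apply: tight_no_consecutive JC KC zJ _.
have e : (12 * t + 6 = (6 * t + 3 + 2 * (3 * t + 1)).+1)%N by lia.
by rewrite e -natr1 in hK.
Qed.

End Tight.

Lemma scac3_card_lt : (8 * #|C| < n + 6)%N.
Proof. by rewrite ltnNge; apply/negP => /tight_false. Qed.

End WeightThree.

Local Close Scope ring_scope.

Theorem mainTheorem7 (L : nat) (hL : 18 <= L) (hmod : L = 12 %[mod 24])
  (C : {set {set 'Z_L}}) (hC : is_SCAC 3 C) :
  #|C| <= (L - 4) %/ 8.
Proof.
case: L hL hmod C hC => [|[|n]] // _ hmod C hC.
have [t hN] : exists t, n.+2 = 24 * t + 12.
  by exists (n.+2 %/ 24); have := divn_eq n.+2 24; rewrite hmod; lia.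
have [C_le1|C_gt1] := leqP #|C| 1; first by lia.
by have := scac3_card_lt hN hC C_gt1; lia.
Qed.
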